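(* Let $\mathcal{G}$ be the complete quadrilateral, let $R$ be a commutative ring with $2=0$, let $A=M_R(\mathcal{G},1)$ and let $A'=A/\operatorname{Ann}(A)$ (a $5$-dimensional algebra). For each of the $4$ lines $\ell$ of $\mathcal{G}$, let $A'^\ell_0$ and $A'^\ell_1$ be the eigenspaces of the operator $\operatorname{ad}_\ell$ on $A'$ for the eigenvalues $0$ and $1$. Then for each line $\ell$, $A'=A'^\ell_0\oplus A'^\ell_1$ and \[ A'^\ell_0A'^\ell_0\subseteq A'^\ell_0,\quad A'^\ell_0A'^\ell_1\subseteq A'^\ell_1,\quad A'^\ell_1A'^\ell_1=0, \] i.e. $A'$ is a decomposition algebra with fusion law $0*0=\{0\}$, $0*1=1*0=\{1\}$, $1*1=\emptyset$. Moreover, the subspaces $A'^\ell_1$ coincide for all $4$ choices of $\ell$.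
   Context: The complete quadrilateral is the partial linear space with $6$ points $a,b,c,x,y,z$ and $4$ lines $\{a,b,c\}$, $\{a,y,z\}$, $\{b,x,z\}$, $\{c,x,y\}$. For distinct collinear points $p,q$ (written $p\sim q$), $p\wedge q$ is the third point of their line. The nilpotent Matsuo algebra $A=M_R(\mathcal{G},1)$ is the free $R$-module with basis the points and commutative bilinear product $p\cdot q=0$ if $p=q$ or $p\not\sim q$, $p\cdot q=p+q+p\wedge q$ if $p\sim q$. $\operatorname{Ann}(A)=\{v\in A: vw=0\ \forall w\in A\}$, and $A'=A/\operatorname{Ann}(A)$ with induced product. For a line $\ell$ we write $\ell$ also for the sum of its three points, and $\operatorname{ad}_\ell(v)=\ell v$ (also on $A'$). *)

From HB Require Import structures.
From mathcomp Require Import all_boot all_order all_algebra.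
Set Implicit Arguments. Unset Strict Implicit. Unset Printing Implicit Defensive.
Import GRing.Theory.
Local Open Scope ring_scope.

Definition pt := 'I_6.
Definition pa : pt := inord 0.
Definition pb : pt := inord 1.
Definition pc : pt := inord 2.
Definition px : pt := inord 3.
Definition py : pt := inord 4.
Definition pz : pt := inord 5.

Definition lines : seq {set pt} :=
  [:: [set pa; pb; pc]; [set pa; py; pz]; [set pb; px; pz]; [set pc; px; py]].

Definition coll (p q : pt) : bool :=
  (p != q) && has (fun l : {set pt} => (p \in l) && (q \in l)) lines.

(* p /\ q : the third point of the line through p and q (p if not collinear) *)
Definition wedge (p q : pt) : pt :=
  odflt p [pick r | [&& r != p, r != q &
     has (fun l : {set pt} => [&& p \in l, q \in l & r \in l]) lines]].

Section Matsuo.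
Variable R : comPzRingType.

(* A = M_R(G,1): free R-module with basis the points, realised as 'rV[R]_6 *)
Definition A := 'rV[R]_6.
Definition bvec (p : pt) : A := delta_mx 0 p.

Definition bprod (p q : pt) : A :=
  if coll p q then bvec p + bvec q + bvec (wedge p q) else 0.

Definition amul (u v : A) : A :=
  \sum_(p : pt) \sum_(q : pt) (u 0 p * v 0 q) *: bprod p q.

Definition ann (v : A) : Prop := forall w : A, amul v w = 0.

Definition lvec (l : {set pt}) : A := \sum_(p in l) bvec p.

(* A' = A / Ann(A) is handled through representatives: v in A represents
   the class v + Ann(A).  [eig0 l v] says the class of v lies in the
   0-eigenspace A'^l_0 of ad_l on A', i.e. l v = 0 in A';
   [eig1 l v] says the class of v lies in A'^l_1, i.e. l v = v in A'. *)
Definition eig0 (l : {set pt}) (v : A) : Prop := ann (amul (lvec l) v).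
Definition eig1 (l : {set pt}) (v : A) : Prop := ann (amul (lvec l) v - v).

End Matsuo.

From HB Require Import structures.
From mathcomp Require Import all_boot all_order all_algebra.
From Stdlib Require Import Ring.
Import GRing.Theory.
Local Open Scope ring_scope.

(* Ann(A) is the line of constant vectors.  Relabelling the points by an
   automorphism of the quadrilateral (the group S_4 permuting the four lines)
   is an automorphism of A, and these relabellings act transitively on the
   lines, so it suffices to treat the line {a, b, c}.  For it, ad_l v is
   congruent to 0 modulo Ann(A) iff v_x = v_y = v_z, and to v iff v takes
   equal values on the three non-collinear pairs {a, x}, {b, y}, {c, z}; the
   latter condition is invariant under every automorphism, so A'_1 does not
   depend on the line.  The fusion rules are then polynomial identities in
   the coordinates, valid in characteristic 2. *)

(* The points a, b, c, x, y, z are encoded by their indices 0, ..., 5, so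
   that incidence questions are decided by computation. *)
Definition line_table : seq (seq nat) :=
  [:: [:: 0; 1; 2]; [:: 0; 4; 5]; [:: 1; 3; 5]; [:: 2; 3; 4]]%N.

Lemma linesE : lines = [seq [set p : pt | val p \in s] | s <- line_table].
Proof.
rewrite /lines /=; congr [:: _; _; _; _]; apply/setP => p.
all: by rewrite !inE -!val_eqE /= !inordK // orbA.
Qed.

Definition on_join (p q r : nat) : bool :=
  (p != q) && has (fun s => [&& p \in s, q \in s & r \in s]) line_table.

Lemma has_linesE (p q r : pt) :
  has (fun l : {set pt} => [&& p \in l, q \in l & r \in l]) lines =
  has (fun s => [&& val p \in s, val q \in s & val r \in s]) line_table.
Proof. by rewrite linesE has_map; apply: eq_has => s; rewrite /= !inE. Qed.

Lemma collE (p q : pt) : coll p q = on_join p q p.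
Proof.
rewrite /coll /on_join -val_eqE; congr (_ && _).
rewrite linesE has_map; apply: eq_has => s; rewrite /= !inE.
by case: (val p \in s); rewrite ?andbT.
Qed.

Definition all_pts (P : pred nat) : bool := all P (iota 0 6).

Lemma all_ptsP (P : pred nat) : all_pts P -> forall p : pt, P p.
Proof. by move/allP=> P_all p; apply: P_all; rewrite mem_iota ltn_ord. Qed.

Lemma on_join_third {p q w : pt} : on_join p q w -> w != p -> w != q ->
  forall r : pt, on_join p q r = [|| r == p, r == q | r == w].
Proof.
have: all_pts (fun p => all_pts (fun q => all_pts (fun w => all_pts (fun r =>
  [==> on_join p q w, w != p, w != q =>
       on_join p q r == [|| r == p, r == q | r == w]])))).
  by [].
move=> checked pqw wp wq r.
move/all_ptsP/(_ p)/all_ptsP/(_ q)/all_ptsP/(_ w)/all_ptsP/(_ r): checked.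
by move=> /implyP/(_ pqw)/implyP/(_ wp)/implyP/(_ wq)/eqP ->.
Qed.

Lemma on_join_coll {p q r : pt} : on_join p q r -> coll p q.
Proof.
rewrite collE => /andP[pq /hasP[s s_line /and3P[ps qs _]]].
by rewrite /on_join pq; apply/hasP; exists s; rewrite ?ps ?qs.
Qed.

Lemma wedge_third {p q : pt} : coll p q ->
  [/\ wedge p q != p, wedge p q != q & on_join p q (wedge p q)].
Proof.
move=> pq; have /andP[pq_neq _] : on_join p q p by rewrite -collE.
rewrite /wedge; case: pickP => [w /and3P[wp wq] | no_third].
  by rewrite has_linesE => pqw; split; rewrite // /on_join pq_neq.
have: all_pts (fun p => all_pts (fun q =>
  on_join p q p ==> has (fun w => [&& w != p, w != q & on_join p q w]) (iota 0 6))).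
  by [].
move/all_ptsP/(_ p)/all_ptsP/(_ q); rewrite -collE pq => /hasP[w].
rewrite mem_iota => /andP[_ w_lt6] /and3P[wp wq /andP[_ pqw]].
case/negP: (negbT (no_third (Ordinal w_lt6))).
by apply/and3P; split; rewrite // has_linesE.
Qed.

Lemma bprod_coord (R : comPzRingType) (p q r : pt) :
  bprod R p q 0 r = (on_join p q r)%:R.
Proof.
rewrite /bprod; case: ifPn => [pq | npq]; last first.
  rewrite mxE; case: (boolP (on_join p q r)) => // /on_join_coll.
  by rewrite (negbTE npq).
have /andP[pq_neq _] := pq; have [wp wq pqw] := wedge_third pq.
rewrite (on_join_third pqw wp wq r) !mxE /= -!natrD; congr _%:R.
have [-> | rp] := eqVneq r p; first by rewrite (negbTE pq_neq) (eq_sym p) (negbTE wp).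
have [-> | rq] := eqVneq r q; first by rewrite (eq_sym q) (negbTE wq).
by case: (r == wedge p q).
Qed.

Lemma pt_eqE (p q : pt) : (p == q) = (p == q :> nat).
Proof. by []. Qed.

Lemma forall_pt (P : pt -> Prop) :
  P pa -> P pb -> P pc -> P px -> P py -> P pz -> forall p, P p.
Proof.
have inordE i (i_lt6 : (i < 6)%N) : Ordinal i_lt6 = inord i.
  by apply: val_inj; rewrite /= inordK.
move=> Pa Pb Pc Px Py Pz [[|[|[|[|[|[|//]]]]]] p_lt6]; rewrite inordE.
- exact: Pa.
- exact: Pb.
- exact: Pc.
- exact: Px.
- exact: Py.
- exact: Pz.
Qed.

Lemma sum_pt (V : nmodType) (F : pt -> V) :
  \sum_p F p = F pa + F pb + F pc + F px + F py + F pz.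
Proof.
rewrite !big_ord_recl big_ord0 addr0 !addrA.
by congr (_ + _ + _ + _ + _ + _); congr F; apply: val_inj; rewrite /= inordK.
Qed.

Definition automorphism (s : pt -> pt) : Prop :=
  forall p q r : pt, on_join (s p) (s q) (s r) = on_join p q r.

Lemma coll_aut {s : pt -> pt} :
  automorphism s -> forall p q, coll (s p) (s q) = coll p q.
Proof. by move=> s_aut p q; rewrite !collE s_aut. Qed.

Definition point_table (t : seq nat) (p : pt) : pt := inord (nth 0 t p).

Local Notation L0 := ([set pa; pb; pc] : {set pt}).

Lemma point_tableP (t line : seq nat) :
  [&& all_pts (fun p => (nth 0 t p < 6) && (nth 0 t (nth 0 t p) == p)),
      all_pts (fun p => all_pts (fun q => all_pts (fun r =>
        on_join (nth 0 t p) (nth 0 t q) (nth 0 t r) == on_join p q r)))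
    & all_pts (fun p => (nth 0 t p \in [:: 0; 1; 2]) == (p \in line))]%N ->
  [/\ involutive (point_table t), automorphism (point_table t)
    & [set p : pt | val p \in line] = point_table t @^-1: L0].
Proof.
case/and3P=> /all_ptsP t_inv /all_ptsP t_aut /all_ptsP t_line.
have val_t p : point_table t p = nth 0 t p :> nat.
  by rewrite inordK //; case/andP: (t_inv p).
split.
- by move=> p; apply: val_inj; rewrite /= !val_t; case/andP: (t_inv p) => _ /eqP.
- move=> p q r; rewrite !val_t; apply/eqP.
  by move/all_ptsP/(_ q)/all_ptsP/(_ r): (t_aut p).
apply/setP => p; rewrite !inE !pt_eqE val_t !inordK // -(eqP (t_line p)) !inE.
by rewrite orbA.
Qed.

Lemma lines_transitive l : l \in lines ->
  exists s, [/\ involutive s, automorphism s & l = s @^-1: L0].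
Proof.
rewrite linesE => /mapP[line line_in ->]; move: line_in; rewrite !inE.
(* Transposing line 0 with line i induces the involution of the points given
   by the table, a point being the intersection of two lines. *)
case/or4P => /eqP->.
- by exists (point_table [:: 0; 1; 2; 3; 4; 5]%N); apply: point_tableP.
- by exists (point_table [:: 0; 5; 4; 3; 2; 1]%N); apply: point_tableP.
- by exists (point_table [:: 5; 1; 3; 2; 4; 0]%N); apply: point_tableP.
- by exists (point_table [:: 4; 3; 2; 1; 0; 5]%N); apply: point_tableP.
Qed.

Lemma eq_of_diff {V : zmodType} {x y s t : V} : s = t -> x - y = s - t -> x = y.
Proof. by move=> -> /eqP; rewrite subrr subr_eq0 => /eqP. Qed.

Section MatsuoAlgebra.

Context {R : comPzRingType}.
Hypothesis char2 : 2%:R = 0 :> R.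
Implicit Types (u v w : A R) (l : {set pt}).

(* Stdlib's [ring] recognises a ring by the syntactic form of its carrier and
   operations, which HB-generated terms do not have uniformly, so goals are
   first folded onto the following names.  The coefficient morphism from
   [bool] makes [ring] normalise modulo 2. *)
Definition char2T : Type := R.
Definition zero2 : char2T := 0.
Definition one2 : char2T := 1.
Definition add2 (x y : char2T) : char2T := x + y.
Definition mul2 (x y : char2T) : char2T := x * y.
Definition opp2 (x : char2T) : char2T := - x.
Definition sub2 (x y : char2T) : char2T := x - y.

Lemma char2_ring_theory : @ring_theory char2T zero2 one2 add2 mul2 sub2 opp2 eq.
Proof.
exact/mk_rt/subrr/(fun _ _ => erefl)/mulrDl/mulrA/mulrC/mul1r/addrA/addrC/add0r.
Qed.

Lemma opp1_char2 : - 1 = 1 :> R.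
Proof. by apply/eqP; rewrite -subr_eq0 -opprD -mulr2n char2 oppr0. Qed.

Lemma bool_char2_morph : ring_morph zero2 one2 add2 mul2 sub2 opp2 eq
  false true xorb andb xorb id Bool.eqb (fun b : bool => b%:R : char2T).
Proof.
rewrite /zero2 /one2 /add2 /mul2 /sub2 /opp2; split=> //=.
- by case; case; rewrite /= ?addr0 ?add0r // -mulr2n char2.
- by case; case; rewrite /= ?subr0 ?sub0r ?subrr ?opp1_char2.
- by case; case; rewrite /= ?mulr1 ?mulr0.
- by case; rewrite /= ?oppr0 ?opp1_char2.
- by case; case.
Qed.

Add Ring char2_ring : char2_ring_theory (morphism bool_char2_morph).

Lemma add2E (x y : R) : x + y = add2 x y. Proof. by []. Qed.
Lemma mul2E (x y : R) : x * y = mul2 x y. Proof. by []. Qed.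
Lemma opp2E (x : R) : - x = opp2 x. Proof. by []. Qed.
Lemma zero2E : 0 = zero2. Proof. by []. Qed.
Lemma one2E : 1 = one2. Proof. by []. Qed.

Ltac ring2 :=
  rewrite ?mulr1n ?mulr0n -[LHS]add0r ?add2E ?mul2E ?opp2E ?zero2E ?one2E;
  match goal with |- ?a = ?b => change (@eq char2T a b) end; ring.

Lemma bvec_coord p q : bvec R p 0 q = (q == p)%:R.
Proof. by rewrite mxE eqxx. Qed.

Lemma lvec_coord l p : lvec R l 0 p = (p \in l)%:R.
Proof.
rewrite /lvec summxE (eq_bigr (fun q => (p == q)%:R)) => [|q _]; last by rewrite mxE eqxx.
case: (boolP (p \in l)) => pl.
  by rewrite (bigD1 p) //= eqxx big1 ?addr0 // => q /andP[_]; rewrite eq_sym => /negbTE->.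
by rewrite big1 // => q ql; case: eqP pl => // ->; rewrite ql.
Qed.

Lemma amul_coord u v r :
  amul u v 0 r = \sum_p \sum_q u 0 p * v 0 q * (on_join p q r)%:R.
Proof.
rewrite /amul summxE; apply: eq_bigr => p _; rewrite summxE; apply: eq_bigr => q _.
by rewrite mxE bprod_coord.
Qed.

Definition line_coef (p q r : pt) u v : R :=
  u 0 p * (v 0 q + v 0 r) + u 0 q * (v 0 p + v 0 r) + u 0 r * (v 0 p + v 0 q).

Ltac expand_amul :=
  rewrite amul_coord !sum_pt !inordK //= /line_coef ?mulr1n ?mulr0n; ring2.

Lemma amul_pa u v : amul u v 0 pa = line_coef pa pb pc u v + line_coef pa py pz u v.
Proof. expand_amul. Qed.
Lemma amul_pb u v : amul u v 0 pb = line_coef pa pb pc u v + line_coef pb px pz u v.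
Proof. expand_amul. Qed.
Lemma amul_pc u v : amul u v 0 pc = line_coef pa pb pc u v + line_coef pc px py u v.
Proof. expand_amul. Qed.
Lemma amul_px u v : amul u v 0 px = line_coef pb px pz u v + line_coef pc px py u v.
Proof. expand_amul. Qed.
Lemma amul_py u v : amul u v 0 py = line_coef pa py pz u v + line_coef pc px py u v.
Proof. expand_amul. Qed.
Lemma amul_pz u v : amul u v 0 pz = line_coef pa py pz u v + line_coef pb px pz u v.
Proof. expand_amul. Qed.

Definition amul_ptE := (amul_pa, amul_pb, amul_pc, amul_px, amul_py, amul_pz).

Ltac coords :=
  rewrite ?mxE ?amul_ptE; try rewrite /line_coef;
  rewrite ?lvec_coord ?bvec_coord ?inE ?pt_eqE ?inordK //= ?mulr1n ?mulr0n.

Lemma annP w : ann w <-> forall p, w 0 p = w 0 pa.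
Proof.
split=> [ann_w | w_const v].
  have e q r : amul w (bvec R q) 0 r = 0 by rewrite ann_w mxE.
  have wbc : w 0 pb = w 0 pc by apply: (eq_of_diff (e pa pb)); coords; ring2.
  have wyz : w 0 py = w 0 pz by apply: (eq_of_diff (e pa py)); coords; ring2.
  have wac : w 0 pa = w 0 pc by apply: (eq_of_diff (e pb pa)); coords; ring2.
  have wxz : w 0 px = w 0 pz by apply: (eq_of_diff (e pb px)); coords; ring2.
  have wbz : w 0 pb = w 0 pz by apply: (eq_of_diff (e px pb)); coords; ring2.
  by apply: forall_pt; congruence.
apply/rowP; apply: forall_pt; rewrite [RHS]mxE; coords;
  rewrite ?(w_const pb) ?(w_const pc) ?(w_const px) ?(w_const py) ?(w_const pz); ring2.
Qed.

Definition opposite_symmetric v : Prop := forall p q : pt, ~~ coll p q -> v 0 p = v 0 q.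

Definition decomposition_law (l : {set pt}) : Prop :=
     (forall v : A R, exists u0 u1 : A R,
         [/\ eig0 l u0, eig1 l u1 & ann (v - (u0 + u1))]) /\
     (forall w : A R, eig0 l w -> eig1 l w -> ann w) /\
     (forall u v : A R, eig0 l u -> eig0 l v -> eig0 l (amul u v)) /\
     (forall u v : A R, eig0 l u -> eig1 l v -> eig1 l (amul u v)) /\
     (forall u v : A R, eig1 l u -> eig0 l v -> eig1 l (amul u v)) /\
     (forall u v : A R, eig1 l u -> eig1 l v -> ann (amul u v)).

Section Relabel.

Context {s : pt -> pt} (sK : involutive s) (s_aut : automorphism s).

Definition relabel v : A R := \row_p v 0 (s p).

Lemma relabelK : involutive relabel.
Proof. by move=> v; apply/rowP => p; rewrite !mxE sK. Qed.

Lemma relabelD u v : relabel (u + v) = relabel u + relabel v.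
Proof. by apply/rowP => p; rewrite !mxE. Qed.

Lemma relabelB u v : relabel (u - v) = relabel u - relabel v.
Proof. by apply/rowP => p; rewrite !mxE. Qed.

Lemma amul_relabel u v : amul (relabel u) (relabel v) = relabel (amul u v).
Proof.
apply/rowP => r; rewrite [RHS]mxE !amul_coord [RHS](reindex_inj (inv_inj sK)).
apply: eq_bigr => p _; rewrite [RHS](reindex_inj (inv_inj sK)); apply: eq_bigr => q _.
by rewrite !mxE s_aut.
Qed.

Lemma lvec_relabel l : relabel (lvec R l) = lvec R (s @^-1: l).
Proof. by apply/rowP => p; rewrite mxE !lvec_coord inE. Qed.

Lemma ann_relabel w : ann (relabel w) <-> ann w.
Proof.
rewrite !annP; split=> w_const p; last by rewrite !mxE (w_const (s p)) (w_const (s pa)).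
by have := w_const (s p); have := w_const (s pa); rewrite !mxE !sK => -> ->.
Qed.

Lemma eig0_relabel l v : eig0 (s @^-1: l) (relabel v) <-> eig0 l v.
Proof. by rewrite /eig0 -lvec_relabel amul_relabel ann_relabel. Qed.

Lemma eig1_relabel l v : eig1 (s @^-1: l) (relabel v) <-> eig1 l v.
Proof. by rewrite /eig1 -lvec_relabel amul_relabel -relabelB ann_relabel. Qed.

Lemma opposite_symmetric_relabel v :
  opposite_symmetric (relabel v) <-> opposite_symmetric v.
Proof.
split=> v_sym p q pq; last by rewrite !mxE; apply: v_sym; rewrite (coll_aut s_aut).
rewrite -(sK p) -(sK q); have := v_sym (s p) (s q).
by rewrite (coll_aut s_aut) !mxE; apply.
Qed.

Lemma decomposition_law_relabel l :
  decomposition_law l -> decomposition_law (s @^-1: l).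
Proof.
have eig0E u : eig0 (s @^-1: l) u <-> eig0 l (relabel u).
  by rewrite -{1}(relabelK u) eig0_relabel.
have eig1E u : eig1 (s @^-1: l) u <-> eig1 l (relabel u).
  by rewrite -{1}(relabelK u) eig1_relabel.
have annE u : ann u <-> ann (relabel u) by rewrite ann_relabel.
move=> [dec [cap [f00 [f01 [f10 f11]]]]].
split; [|split; [|split; [|split; [|split]]]].
- move=> v; have [u0 [u1 [u0_0 u1_1 v_ann]]] := dec (relabel v).
  exists (relabel u0), (relabel u1); split; first by rewrite eig0E relabelK.
    by rewrite eig1E relabelK.
  by rewrite annE relabelB relabelD !relabelK.
- by move=> w; rewrite eig0E eig1E annE; apply: cap.
- by move=> u v; rewrite !eig0E -amul_relabel; apply: f00.
- by move=> u v; rewrite eig0E !eig1E -amul_relabel; apply: f01.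
- by move=> u v; rewrite eig0E !eig1E -amul_relabel; apply: f10.
- by move=> u v; rewrite !eig1E annE -amul_relabel; apply: f11.
Qed.

End Relabel.

Lemma opposite_symmetricP v : opposite_symmetric v <->
  [/\ v 0 pa = v 0 px, v 0 pb = v 0 py & v 0 pc = v 0 pz].
Proof.
split=> [v_sym | [vax vby vcz]].
  by split; apply: v_sym; rewrite collE !inordK.
apply: forall_pt; apply: forall_pt; rewrite collE !inordK //= => _.
all: by rewrite ?vax ?vby ?vcz.
Qed.

Lemma eig0_L0P v : eig0 L0 v <-> v 0 px = v 0 py /\ v 0 px = v 0 pz.
Proof.
rewrite /eig0 annP; split=> [v_eig | [vxy vxz]].
  by split; [apply: (eq_of_diff (v_eig pb)) | apply: (eq_of_diff (v_eig pc))];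
    coords; ring2.
by apply: forall_pt; coords; rewrite -?vxy -?vxz; ring2.
Qed.

Lemma eig1_L0P v : eig1 L0 v <-> opposite_symmetric v.
Proof.
rewrite /eig1 annP opposite_symmetricP; split=> [v_eig | [vax vby vcz]].
  split; [apply: (eq_of_diff (v_eig px)) |
          apply: (eq_of_diff (etrans (v_eig py) (esym (v_eig pb)))) |
          apply: (eq_of_diff (etrans (v_eig pz) (esym (v_eig pc))))]; coords; ring2.
by apply: forall_pt; coords; rewrite -?vax -?vby -?vcz; ring2.
Qed.

Lemma decomposition_law_L0 : decomposition_law L0.
Proof.
split; [|split; [|split; [|split; [|split]]]].
- (* project along span(a, b, c) onto span(a + x, b + y, c + z) *)
  move=> v; set u1 := v 0 px *: (bvec R pa + bvec R px)
    + v 0 py *: (bvec R pb + bvec R py) + v 0 pz *: (bvec R pc + bvec R pz).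
  exists (v - u1), u1; split.
  + by apply/eig0_L0P; split; coords; ring2.
  + by apply/eig1_L0P/opposite_symmetricP; split; coords; ring2.
  + by rewrite subrK subrr; apply/annP => p; rewrite !mxE.
- move=> w; rewrite eig0_L0P eig1_L0P opposite_symmetricP annP.
  move=> -[wxy wxz] [wax wby wcz].
  by apply: forall_pt; congruence.
- move=> u v; rewrite !eig0_L0P => -[uxy uxz] [vxy vxz].
  by split; coords; rewrite -?uxy -?uxz -?vxy -?vxz; ring2.
- move=> u v; rewrite eig0_L0P !eig1_L0P !opposite_symmetricP => -[uxy uxz] [vax vby vcz].
  by split; coords; rewrite -?uxy -?uxz -?vax -?vby -?vcz; ring2.
- move=> u v; rewrite eig0_L0P !eig1_L0P !opposite_symmetricP => -[uax uby ucz] [vxy vxz].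
  by split; coords; rewrite -?uax -?uby -?ucz -?vxy -?vxz; ring2.
- move=> u v; rewrite !eig1_L0P !opposite_symmetricP annP => -[uax uby ucz] [vax vby vcz].
  by apply: forall_pt; coords; rewrite -?uax -?uby -?ucz -?vax -?vby -?vcz; ring2.
Qed.

Lemma decomposition_law_line l : l \in lines -> decomposition_law l.
Proof.
case/lines_transitive => s [sK s_aut ->].
exact: (decomposition_law_relabel sK s_aut _ decomposition_law_L0).
Qed.

Lemma eig1_line l v : l \in lines -> eig1 l v <-> opposite_symmetric v.
Proof.
case/lines_transitive => s [sK s_aut ->].
rewrite -{1}(relabelK sK v) (eig1_relabel sK s_aut) eig1_L0P.
exact: opposite_symmetric_relabel.
Qed.

End MatsuoAlgebra.

Theorem corollary5p15 (R : comPzRingType) (char2 : (2%:R : R) = 0) :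
  (forall l : {set pt}, l \in lines ->
     (* A' = A'^l_0 + A'^l_1 *)
     (forall v : A R, exists u0 u1 : A R,
         [/\ eig0 l u0, eig1 l u1 & ann (v - (u0 + u1))]) /\
     (* A'^l_0 \cap A'^l_1 = 0 *)
     (forall w : A R, eig0 l w -> eig1 l w -> ann w) /\
     (* fusion law *)
     (forall u v : A R, eig0 l u -> eig0 l v -> eig0 l (amul u v)) /\
     (forall u v : A R, eig0 l u -> eig1 l v -> eig1 l (amul u v)) /\
     (forall u v : A R, eig1 l u -> eig0 l v -> eig1 l (amul u v)) /\
     (forall u v : A R, eig1 l u -> eig1 l v -> ann (amul u v))) /\
  (* the 1-eigenspaces coincide for all lines *)
  (forall l l' : {set pt}, l \in lines -> l' \in lines ->
     forall v : A R, eig1 l v <-> eig1 l' v).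
Proof.
split=> [l | l l' l_line l'_line v]; first exact: decomposition_law_line char2 l.
by rewrite (eig1_line char2 l v l_line) (eig1_line char2 l' v l'_line).
Qed.
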